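(* Let $G$ be a finite simple connected graph containing no cycle of length $3$ and no cycle of length $5$ as a subgraph, and let $\kappa>0$ be such that $\kappa_{LLY}(u,v)\ge\kappa$ for every edge $uv$ of $G$. Then for any vertex $x$ and any vertex $y$ with $d(x,y)=i$, where $1\le i\le \mathrm{diam}(G)\le\lfloor 2/\kappa\rfloor$, $$|\Gamma^+_x(y)|+|\Gamma^0_x(y)|\le\left(1-\frac{i\kappa}{2}\right)d_y.$$
   Context: For vertices $u,v$ of a connected graph $G$, $d(u,v)$ is the graph distance, $\mathrm{diam}(G)=\max_{u,v}d(u,v)$, $N(v)$ is the neighborhood of $v$ and $d_v=|N(v)|$. For vertices $x,y$: $\Gamma^-_x(y)=\{u\in N(y): d(x,u)=d(x,y)-1\}$, $\Gamma^0_x(y)=\{u\in N(y): d(x,u)=d(x,y)\}$, $\Gamma^+_x(y)=\{u\in N(y): d(x,u)=d(x,y)+1\}$. For $0\le\alpha<1$, the $\alpha$-lazy random walk is $m_x^\alpha(x)=\alpha$, $m_x^\alpha(v)=(1-\alpha)/d_x$ for $v\in N(x)$, $m_x^\alpha(v)=0$ otherwise. The transportation distance between probability distributions $m_1,m_2$ on $V(G)$ is $W(m_1,m_2)=\inf_A\sum_{x,y}A(x,y)d(x,y)$ over couplings $A:V\times V\to[0,1]$ with marginals $m_1,m_2$. For distinct $x,y$, $\kappa_\alpha(x,y)=1-W(m_x^\alpha,m_y^\alpha)/d(x,y)$ and $\kappa_{LLY}(x,y)=\lim_{\alpha\to1}\kappa_\alpha(x,y)/(1-\alpha)$. (It is known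 that under the curvature hypothesis, $\mathrm{diam}(G)\le 2/\kappa$.) *)

From HB Require Import structures.
From mathcomp Require Import all_boot all_order all_algebra.
From mathcomp Require Import all_classical all_reals all_analysis.
Set Implicit Arguments. Unset Strict Implicit. Unset Printing Implicit Defensive.
Import Order.TTheory GRing.Theory Num.Theory.
Import numFieldNormedType.Exports.
Local Open Scope ring_scope.
Local Open Scope classical_set_scope.

Section Graph.
Variables (T : finType) (e : rel T).

Definition simple_graph := symmetric e /\ irreflexive e.

Definition connected_graph := forall x y : T, connect e x y.

Definition has_cycle_subgraph (k : nat) :=
  exists f : 'I_k -> T, injective f /\ forall i : 'I_k, e (f i) (f (ordS i)).

Definition walk_of_length (n : nat) (x y : T) : bool :=
  [exists p : n.-tuple T, path e x p && (last x p == y)].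

(* graph distance: the least n with a walk (equivalently a path) of length n
   from x to y; in a connected graph this is < #|T|. *)
Definition dist (x y : T) : nat :=
  find (fun n => walk_of_length n x y) (iota 0 #|T|).

Definition diam : nat := \max_(u : T) \max_(v : T) dist u v.

Definition nbhd (v : T) : {set T} := [set u | e v u].
Definition deg (v : T) : nat := #|nbhd v|.

Definition Gamma_minus (x y : T) : {set T} :=
  [set u in nbhd y | (dist x u).+1 == dist x y].
Definition Gamma_zero (x y : T) : {set T} :=
  [set u in nbhd y | dist x u == dist x y].
Definition Gamma_plus (x y : T) : {set T} :=
  [set u in nbhd y | dist x u == (dist x y).+1].

Variable R : realType.

Definition lazy_walk (alpha : R) (x : T) (v : T) : R :=
  if v == x then alpha
  else if e x v then (1 - alpha) / (deg x)%:R else 0.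

Definition is_coupling (m1 m2 : T -> R) (A : T -> T -> R) :=
  (forall u v, 0 <= A u v <= 1) /\
  (forall u, \sum_(v : T) A u v = m1 u) /\
  (forall v, \sum_(u : T) A u v = m2 v).

Definition transport_dist (m1 m2 : T -> R) : R :=
  inf [set c : R | exists A : T -> T -> R, is_coupling m1 m2 A /\
        c = \sum_(u : T) \sum_(v : T) A u v * (dist u v)%:R].

Definition kappa_alpha (alpha : R) (x y : T) : R :=
  1 - transport_dist (lazy_walk alpha x) (lazy_walk alpha y) / (dist x y)%:R.

Definition kappa_LLY (x y : T) : R :=
  lim ((fun alpha : R => kappa_alpha alpha x y / (1 - alpha) : R)
         @ at_left (1 : R)).

End Graph.

From HB Require Import structures.
From mathcomp Require Import all_boot all_order all_algebra.
From mathcomp Require Import all_classical all_reals all_analysis.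
From mathcomp Require Import lra ring zify.
Set Implicit Arguments.
Unset Strict Implicit.
Unset Printing Implicit Defensive.

Import Order.TTheory GRing.Theory Num.Theory.
Import numFieldNormedType.Exports.
Local Open Scope ring_scope.

(* Fix x and an edge vw with d(x,w) = d(x,v) + 1, and let g(y) = 2 |Γ⁻_x(y)| / d_y.
   Let f be 1 at v, 2 at w, 0 on Γ⁻_x(v) and 2 on the rest of N(v), 1 on Γ⁻_x(w)
   and 3 on the rest of N(w). Then f(b) - f(a) <= d(a,b) for a in N[v] and b in
   N[w]: the only delicate pairs, a in Γ⁻_x(v) and b in N(w) \ Γ⁻_x(w), are at
   distance 3 because G has no triangle and no pentagon. Testing the transport
   distance against f gives W(m_v^α, m_w^α) >= 1 - (1 - α)(g(w) - g(v)), hence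
   κ <= κ_LLY(v,w) <= g(w) - g(v). Summing along a geodesic from x to y yields
   iκ <= g(y), i.e. |Γ⁻_x(y)| >= iκ d_y / 2, and Γ⁺_x(y), Γ⁰_x(y), Γ⁻_x(y) are
   disjoint subsets of N(y). *)

Lemma card_sep_sum (T : finType) (A : {pred T}) (P : pred T) :
  #|[set u in A | P u]| = (\sum_(u in A) P u)%N.
Proof.
rewrite -sum1_card (eq_bigl (fun u => (u \in A) && P u)) => [|u]; last by rewrite inE.
by rewrite big_mkcondr /=; apply: eq_bigr => u _; case: (P u).
Qed.

Section Distance.
Variables (T : finType) (e : rel T).

Lemma walk_of_lengthP n a b :
  reflect (exists p : seq T, [/\ size p = n, path e a p & last a p = b])
          (walk_of_length e n a b).
Proof.
apply: (iffP existsP) => [[p /andP[pP /eqP pL]] | [p [/eqP pS pP pL]]].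
  by exists (val p); rewrite size_tuple.
by exists (Tuple pS); rewrite /= pP pL eqxx.
Qed.

Lemma dist_le_walk n a b : walk_of_length e n a b -> (dist e a b <= n)%N.
Proof.
move=> abW; rewrite /dist; have [n_lt|n_ge] := ltnP n #|T|; last first.
  by apply: leq_trans (find_size _ _) _; rewrite size_iota.
rewrite leqNgt; apply/negP => /(before_find 0).
by rewrite nth_iota // add0n abW.
Qed.

Hypothesis connected : connected_graph e.

Lemma dist_walk a b : walk_of_length e (dist e a b) a b.
Proof.
have /connectP[p pP pL] := connected a b.
case: (shortenP pP) pL => q qP q_uniq _ qL.
have q_lt : (size q < #|T|)%N by rewrite -[(size q).+1](card_uniqP q_uniq) max_card.
have qW : walk_of_length e (size q) a b by apply/walk_of_lengthP; exists q.
have has_walk : has (fun n => walk_of_length e n a b) (iota 0 #|T|).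
  by apply/hasP; exists (size q); rewrite // mem_iota.
have := nth_find 0 has_walk; rewrite nth_iota ?add0n //.
by rewrite -[X in (_ < X)%N](size_iota 0) -has_find.
Qed.

Lemma dist_eq0 {a b} : dist e a b = 0%N -> a = b.
Proof.
move=> d0; have := dist_walk a b; rewrite d0.
by case/walk_of_lengthP=> -[|c p] [] // _ _ <-.
Qed.

Lemma dist_eq1 {a b} : dist e a b = 1%N -> e a b.
Proof.
move=> d1; have := dist_walk a b; rewrite d1.
by case/walk_of_lengthP=> -[|c [|d p]] [] //= _; rewrite andbT => ac <-.
Qed.

Lemma dist_eq2 {a b} : dist e a b = 2%N -> exists2 c, e a c & e c b.
Proof.
move=> d2; have := dist_walk a b; rewrite d2.
case/walk_of_lengthP=> -[|c [|d [|f p]]] [] //= _ /and3P[ac cb _] <-.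
by exists c.
Qed.

Lemma dist_edge x a b : e a b -> (dist e x b <= (dist e x a).+1)%N.
Proof.
move=> ab; apply: dist_le_walk; have /walk_of_lengthP[p [pS pP pL]] := dist_walk x a.
by apply/walk_of_lengthP; exists (rcons p b); rewrite size_rcons rcons_path last_rcons pS pP pL.
Qed.

Lemma dist_gt0 a b : a != b -> (0 < dist e a b)%N.
Proof. by rewrite lt0n; apply: contra => /eqP/dist_eq0->. Qed.

Lemma dist_adj a b : irreflexive e -> e a b -> dist e a b = 1%N.
Proof.
move=> e_irr ab; apply/eqP; rewrite eqn_leq dist_gt0 ?andbT.
  by apply: dist_le_walk; apply/walk_of_lengthP; exists [:: b]; rewrite /= ab.
by apply: contraTneq ab => ->; rewrite e_irr.
Qed.

Lemma dist_gt1 a b : a != b -> ~~ e a b -> (1 < dist e a b)%N.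
Proof.
move=> /dist_gt0; case d1: (dist e a b) => [|[|//]] // _.
by rewrite (dist_eq1 d1).
Qed.

Lemma dist_gt2 a b : a != b -> ~~ e a b -> (forall c, e a c -> ~~ e c b) ->
  (2 < dist e a b)%N.
Proof.
move=> /dist_gt1 ab_gt1 /ab_gt1; case d2: (dist e a b) => [|[|[|//]]] // _ no_mid.
by have [c ac cb] := dist_eq2 d2; move: (no_mid c ac); rewrite cb.
Qed.

Lemma dist_pred {x y n} : dist e x y = n.+1 -> exists2 z, e z y & dist e x z = n.
Proof.
move=> dy; have := dist_walk x y; rewrite dy.
case/walk_of_lengthP=> p [pS pP pL]; case/lastP: p pS pP pL => // p z.
rewrite size_rcons rcons_path last_rcons => -[pS] /andP[pP zy] zy_eq; subst z.
exists (last x p) => //; apply/eqP; rewrite eqn_leq.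
have -> : (n <= dist e x (last x p))%N by rewrite -ltnS -dy dist_edge.
by rewrite andbT; apply: dist_le_walk; apply/walk_of_lengthP; exists p.
Qed.

Lemma dist_mulr_le (R : numDomainType) (g : T -> R) (c : R) x :
  (forall z, 0 <= g z) ->
  (forall v w, e v w -> dist e x w = (dist e x v).+1 -> c <= g w - g v) ->
  forall y, (dist e x y)%:R * c <= g y.
Proof.
move=> g_ge0 g_step y; move: {2}(dist e x y) (erefl (dist e x y)) => n.
elim: n y => [|n IHn] y dy; rewrite dy ?mul0r //.
have [z zy dz] := dist_pred dy.
have step : c <= g y - g z by apply: g_step; rewrite // dy dz.
have IHz : n%:R * c <= g z by rewrite -dz IHn.
by rewrite -[g y](subrK (g z)) mulrSr mulrDl mul1r addrC lerD.
Qed.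

End Distance.

Lemma Gamma_card_le (T : finType) (e : rel T) x y :
  (#|Gamma_plus e x y| + #|Gamma_zero e x y| + #|Gamma_minus e x y| <= deg e y)%N.
Proof.
rewrite !card_sep_sum /deg -sum1_card -!big_split /=.
by apply: leq_sum => u _; do 3 case: eqP => /=; lia.
Qed.

Section CycleFree.
Variables (T : finType) (e : rel T).

Lemma has_cycle_subgraph_seq k (s : seq T) a0 : size s = k -> uniq s ->
  (forall i : 'I_k, e (nth a0 s i) (nth a0 s (ordS i))) -> has_cycle_subgraph e k.
Proof.
move=> sS s_uniq s_cyc; exists (nth a0 s); split=> // i j /eqP.
by rewrite nth_uniq ?sS // => /eqP/val_inj.
Qed.

Hypothesis e_irr : irreflexive e.

Lemma edge_neq {a b} : e a b -> a != b.
Proof. by apply: contraTneq => ->; rewrite e_irr. Qed.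

Lemma no_triangle a b c : ~ has_cycle_subgraph e 3 -> e a b -> e b c -> ~~ e c a.
Proof.
move=> no3 ab bc; apply/negP => ca; apply: no3.
apply: (@has_cycle_subgraph_seq 3 [:: a; b; c] a) => [//||[[|[|[|//]]] i_lt]] //=.
by rewrite !inE negb_or (edge_neq ab) (edge_neq bc) [a == c]eq_sym (edge_neq ca).
Qed.

Lemma no_pentagon a b c d f : ~ has_cycle_subgraph e 5 -> uniq [:: a; b; c; d; f] ->
  e a b -> e b c -> e c d -> e d f -> ~~ e f a.
Proof.
move=> no5 s_uniq ab bc cd df; apply/negP => fa; apply: no5.
by apply: (@has_cycle_subgraph_seq 5 [:: a; b; c; d; f] a)
  => // -[[|[|[|[|[|//]]]]] i_lt].
Qed.

End CycleFree.

Section LazyWalk.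
Variables (R : realType) (T : finType) (e : rel T).

Lemma deg_gt0 {y b} : e y b -> (0 < deg e y)%N.
Proof. by move=> yb; apply/card_gt0P; exists b; rewrite inE. Qed.

Lemma lazy_walk_ge0 (a : R) y u : 0 <= a <= 1 -> 0 <= lazy_walk e a y u.
Proof.
case/andP=> a_ge0 a_le1; rewrite /lazy_walk.
by do 2 case: ifP => // _; rewrite divr_ge0 ?subr_ge0.
Qed.

Lemma lazy_walk_supp (a : R) y u : lazy_walk e a y u != 0 -> (u == y) || e y u.
Proof. by rewrite /lazy_walk; do 2 case: ifP => //; rewrite eqxx. Qed.

Hypothesis e_irr : irreflexive e.

Lemma lazy_walk_expect (a : R) y (g : T -> R) :
  \sum_u lazy_walk e a y u * g u
    = a * g y + (1 - a) / (deg e y)%:R * \sum_(u in nbhd e y) g u.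
Proof.
rewrite (bigD1 y) //= /lazy_walk eqxx; congr (_ + _).
rewrite mulr_sumr [RHS]big_mkcond [LHS]big_mkcond; apply: eq_bigr => u _.
rewrite !inE; have [->|uy] := eqVneq u y; first by rewrite e_irr.
by case: (e y u); rewrite ?mul0r.
Qed.

Lemma lazy_walk_sum1 (a : R) y b : e y b -> \sum_u lazy_walk e a y u = 1.
Proof.
move=> yb; have := lazy_walk_expect a y (fun _ => 1).
under eq_bigr do rewrite mulr1.
move=> ->; rewrite sumr_const -/(deg e y) mulr1 mulfVK ?subrKC //.
by rewrite pnatr_eq0 -lt0n (deg_gt0 yb).
Qed.

End LazyWalk.

Section Transport.
Variables (R : realType) (T : finType) (e : rel T).

Lemma prob_le1 (m : T -> R) : (forall u, 0 <= m u) -> \sum_u m u = 1 ->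
  forall u, m u <= 1.
Proof.
by move=> m_ge0 m_sum u; rewrite -m_sum (bigD1 u) //= lerDl sumr_ge0.
Qed.

Lemma transport_dist_ge (m1 m2 f : T -> R) :
  (forall u, 0 <= m1 u) -> (forall u, 0 <= m2 u) ->
  \sum_u m1 u = 1 -> \sum_u m2 u = 1 ->
  (forall a b, m1 a != 0 -> m2 b != 0 -> f b - f a <= (dist e a b)%:R) ->
  \sum_u m2 u * f u - \sum_u m1 u * f u <= transport_dist e m1 m2.
Proof.
move=> m1_ge0 m2_ge0 m1_sum m2_sum f_lip; apply: lb_le_inf.
  exists (\sum_u \sum_z m1 u * m2 z * (dist e u z)%:R).
  exists (fun u z => m1 u * m2 z); split=> //; split; last split.
  - by move=> u z; rewrite mulr_ge0 ?mulr_ile1 ?prob_le1.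
  - by move=> u; rewrite -mulr_sumr m2_sum mulr1.
  - by move=> z; rewrite -mulr_suml m1_sum mul1r.
move=> _ [A [[A01 [A_row A_col]] ->]].
have A_ge0 u z : 0 <= A u z by case/andP: (A01 u z).
have -> : \sum_u m1 u * f u = \sum_u \sum_z A u z * f u.
  by apply: eq_bigr => u _; rewrite -A_row mulr_suml.
have -> : \sum_z m2 z * f z = \sum_u \sum_z A u z * f z.
  by rewrite exchange_big; apply: eq_bigr => z _; rewrite -A_col mulr_suml.
rewrite -sumrB; apply: ler_sum => u _; rewrite -sumrB; apply: ler_sum => z _.
rewrite -mulrBr; have [->|Auz_neq0] := eqVneq (A u z) 0; first by rewrite !mul0r.
apply: ler_wpM2l => //; apply: f_lip.
  apply: contra_neq Auz_neq0 => m1u0.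
  by have := A_row u; rewrite m1u0 => /(psumr_eq0P (fun i _ => A_ge0 u i))/(_ z isT).
apply: contra_neq Auz_neq0 => m2z0.
by have := A_col z; rewrite m2z0 => /(psumr_eq0P (fun i _ => A_ge0 i z))/(_ u isT).
Qed.

End Transport.

Section GeodesicEdge.
Variables (T : finType) (e : rel T).
Hypotheses (connected : connected_graph e) (e_sym : symmetric e) (e_irr : irreflexive e).
Hypotheses (no3 : ~ has_cycle_subgraph e 3) (no5 : ~ has_cycle_subgraph e 5).
Variables (x v w : T).
Hypotheses (vw : e v w) (dw : dist e x w = (dist e x v).+1).

Definition test_fun (u : T) : nat :=
  if u == v then 1 else if u == w then 2
  else if e v u then (if u \in Gamma_minus e x v then 0 else 2)
  else if u \in Gamma_minus e x w then 1 else 3.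

Lemma test_fun_le3 u : (test_fun u <= 3)%N.
Proof. by rewrite /test_fun; do ! case: ifP. Qed.

Lemma test_fun_v : test_fun v = 1%N.
Proof. by rewrite /test_fun eqxx. Qed.

Lemma test_fun_w : test_fun w = 2%N.
Proof. by rewrite /test_fun eqxx eq_sym (negbTE (edge_neq e_irr vw)). Qed.

Lemma test_fun_nbhd_v u : e v u -> u != w ->
  test_fun u = if u \in Gamma_minus e x v then 0%N else 2%N.
Proof.
by move=> vu uw; rewrite /test_fun eq_sym (negbTE (edge_neq e_irr vu)) (negbTE uw) vu.
Qed.

Lemma test_fun_nbhd_w u : e w u -> u != v ->
  test_fun u = if u \in Gamma_minus e x w then 1%N else 3%N.
Proof.
move=> wu uv; have vu : ~~ e v u by rewrite e_sym (no_triangle e_irr no3 vw wu).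
by rewrite /test_fun (negbTE uv) eq_sym (negbTE (edge_neq e_irr wu)) (negbTE vu).
Qed.

Lemma w_notin_Gamma_minus : w \notin Gamma_minus e x v.
Proof. by rewrite !inE vw dw /=; lia. Qed.

Lemma Gamma_minus_edge a b : a \in Gamma_minus e x v -> e w b -> e a b ->
  b \in Gamma_minus e x w.
Proof.
rewrite !inE => /andP[_ /eqP da] wb ab; rewrite wb dw /=.
have := dist_edge connected x ab; rewrite e_sym in wb.
have := dist_edge connected x wb; rewrite dw -da; lia.
Qed.

Lemma Gamma_minus_far a b : a \in Gamma_minus e x v -> e w b -> b != v ->
  b \notin Gamma_minus e x w -> (2 < dist e a b)%N.
Proof.
move=> av_minus wb bv b_notin.
have av : e a v by move: av_minus; rewrite !inE e_sym => /andP[].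
have vb : ~~ e v b by rewrite e_sym (no_triangle e_irr no3 vw wb).
have aw : ~~ e a w by rewrite e_sym (no_triangle e_irr no3 av vw).
have ab : a != b by apply: contraNneq vb => <-; rewrite e_sym.
apply: dist_gt2 => //.
  by apply: contraNN b_notin; apply: Gamma_minus_edge; rewrite // e_sym.
move=> c ac; have ca : e c a by rewrite e_sym.
have [->|cv] := eqVneq c v; first exact: vb.
have [->|cb] := eqVneq c b; first by rewrite e_irr.
have cw : c != w by apply: contraNneq aw => <-.
rewrite e_sym; apply: (no_pentagon no5 _ ca av vw wb).
rewrite /= !inE !negb_or cv cw cb (edge_neq e_irr ca) (edge_neq e_irr av).
rewrite (edge_neq e_irr vw) (edge_neq e_irr wb) ab (eq_sym v b) bv !andbT /=.
by apply: contraNneq w_notin_Gamma_minus => <-.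
Qed.

Lemma test_fun_lipschitz a b : (a == v) || e v a -> (b == w) || e w b ->
  (test_fun b <= test_fun a + dist e a b)%N.
Proof.
move=> a_near b_near; have [<-|ab] := eqVneq a b; first exact: leq_addr.
have ab_gt0 := dist_gt0 connected ab; have fb_le3 := test_fun_le3 b.
have [fab|fab] := leqP (test_fun b) (test_fun a).+1; first by lia.
have [av|av] := eqVneq a v.
  subst a; rewrite test_fun_v in fab *.
  have bw : b != w by apply: contraTneq fab => ->; rewrite test_fun_w.
  have wb : e w b by move: b_near; rewrite (negbTE bw).
  suff : (1 < dist e v b)%N by lia.
  by rewrite dist_gt1 // e_sym (no_triangle e_irr no3 vw wb).
have va : e v a by move: a_near; rewrite (negbTE av).
have aw : a != w by apply: contraTneq fab => ->; rewrite test_fun_w; lia.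
move: fab; rewrite (test_fun_nbhd_v va aw).
case: ifP => [a_minus fb_gt1|]; last by lia.
have [bw|bw] := eqVneq b w.
  subst b; suff : (1 < dist e a w)%N by rewrite test_fun_w; lia.
  have av' : e a v by rewrite e_sym.
  by rewrite dist_gt1 // e_sym (no_triangle e_irr no3 av' vw).
have wb : e w b by move: b_near; rewrite (negbTE bw).
have bv : b != v by apply: contraTneq fb_gt1 => ->; rewrite test_fun_v.
move: fb_gt1; rewrite (test_fun_nbhd_w wb bv); case: ifP => // b_minus _.
have := Gamma_minus_far a_minus wb bv (negbT b_minus); lia.
Qed.

Lemma test_fun_sum_v :
  (\sum_(u in nbhd e v) test_fun u + 2 * #|Gamma_minus e x v| = 2 * deg e v)%N.
Proof.
rewrite card_sep_sum /deg -sum1_card !big_distrr -big_split /=.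
apply: eq_bigr => u; rewrite inE => vu.
have [->|uw] := eqVneq u w; first by rewrite test_fun_w dw; lia.
by rewrite test_fun_nbhd_v // !inE vu; case: (_ == _).
Qed.

Lemma test_fun_sum_w :
  (\sum_(u in nbhd e w) test_fun u + 2 * #|Gamma_minus e x w| = 3 * deg e w)%N.
Proof.
rewrite card_sep_sum /deg -sum1_card !big_distrr -big_split /=.
apply: eq_bigr => u; rewrite inE => wu.
have [->|uv] := eqVneq u v; first by rewrite test_fun_v dw eqxx.
by rewrite test_fun_nbhd_w // !inE wu; case: (_ == _).
Qed.

Variable R : realType.

Definition back_ratio (y : T) : R := 2 * #|Gamma_minus e x y|%:R / (deg e y)%:R.

Lemma test_fun_expect_diff (a : R) :
  \sum_u lazy_walk e a w u * (test_fun u)%:R - \sum_u lazy_walk e a v u * (test_fun u)%:R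
    = 1 - (1 - a) * (back_ratio w - back_ratio v).
Proof.
rewrite !lazy_walk_expect // test_fun_v test_fun_w -!natr_sum /back_ratio.
have sum_v : (\sum_(u in nbhd e v) test_fun u)%:R
    = (2 * deg e v)%:R - (2 * #|Gamma_minus e x v|)%:R :> R.
  by rewrite -test_fun_sum_v natrD addrK.
have sum_w : (\sum_(u in nbhd e w) test_fun u)%:R
    = (3 * deg e w)%:R - (2 * #|Gamma_minus e x w|)%:R :> R.
  by rewrite -test_fun_sum_w natrD addrK.
have deg_v : (deg e v)%:R != 0 :> R by rewrite pnatr_eq0 -lt0n (deg_gt0 vw).
have deg_w : (deg e w)%:R != 0 :> R.
  by rewrite pnatr_eq0 -lt0n (deg_gt0 (_ : e w v)) // e_sym.
rewrite sum_v sum_w !natrM; field.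
by rewrite deg_v deg_w.
Qed.

Lemma transport_dist_lazy_walk_ge (a : R) : 0 <= a <= 1 ->
  1 - (1 - a) * (back_ratio w - back_ratio v)
    <= transport_dist e (lazy_walk e a v) (lazy_walk e a w).
Proof.
move=> a01; rewrite -test_fun_expect_diff.
have wv : e w v by rewrite e_sym.
apply: transport_dist_ge => [u|u|||u z].
- exact: lazy_walk_ge0.
- exact: lazy_walk_ge0.
- by have := lazy_walk_sum1 e_irr a vw.
- by have := lazy_walk_sum1 e_irr a wv.
move=> /lazy_walk_supp u_near /lazy_walk_supp z_near.
by rewrite lerBlDl -natrD ler_nat test_fun_lipschitz.
Qed.

Lemma kappa_alpha_le (a : R) : 0 <= a < 1 ->
  kappa_alpha e a v w / (1 - a) <= back_ratio w - back_ratio v.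
Proof.
case/andP=> a_ge0 a_lt1; have a1_gt0 : 0 < 1 - a by rewrite subr_gt0.
have /transport_dist_lazy_walk_ge : 0 <= a <= 1 by rewrite a_ge0 ltW.
rewrite /kappa_alpha (dist_adj connected e_irr vw) divr1 ler_pdivrMr //.
by move=> W_ge; rewrite mulrC; lra.
Qed.

Lemma kappa_LLY_le :
  0 < kappa_LLY e R v w -> kappa_LLY e R v w <= back_ratio w - back_ratio v.
Proof.
rewrite /kappa_LLY.
(* [lim] of a divergent function is 0, which the positivity hypothesis excludes. *)
set kappa_rate := ((fun a => kappa_alpha e a v w / (1 - a)) @ at_left (1 : R))%classic.
have [kappa_cvg _|/dvgP->] := pselect (cvg kappa_rate); last by rewrite ltxx.
apply: limr_le => //; near=> a; apply: kappa_alpha_le; apply/andP; split.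
  by near: a; exact: nbhs_left_ge ltr01.
by near: a; exact: nbhs_left_lt.
Unshelve. all: by end_near.
Qed.

End GeodesicEdge.

Theorem lemma2p1 (R : realType) (T : finType) (e : rel T) (kappa : R) :
  simple_graph e -> connected_graph e ->
  ~ has_cycle_subgraph e 3 -> ~ has_cycle_subgraph e 5 ->
  0 < kappa ->
  (forall u v : T, e u v -> kappa <= kappa_LLY e R u v) ->
  forall x y : T,
    (1 <= dist e x y)%N -> (dist e x y <= diam e)%N ->
    ((diam e)%:Z <= Num.floor (2 / kappa))%R ->
    (#|Gamma_plus e x y| + #|Gamma_zero e x y|)%:R
      <= (1 - (dist e x y)%:R * kappa / 2) * (deg e y)%:R.
Proof.
move=> [e_sym e_irr] connected no3 no5 kappa_gt0 kappa_le x y dy_gt0 _ _.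
have ratio_step v w : e v w -> dist e x w = (dist e x v).+1 ->
    kappa <= back_ratio e x R w - back_ratio e x R v.
  move=> vw dw; have kappa_vw := kappa_le v w vw.
  have kappa_vw_gt0 := lt_le_trans kappa_gt0 kappa_vw.
  exact: le_trans kappa_vw (kappa_LLY_le connected e_sym e_irr no3 no5 vw dw kappa_vw_gt0).
have ratio_ge0 z : 0 <= back_ratio e x R z by rewrite divr_ge0 ?mulr_ge0.
have [z zy _] := dist_pred connected (esym (prednK dy_gt0)).
have deg_y_gt0 : 0 < (deg e y)%:R :> R by rewrite ltr0n (deg_gt0 (_ : e y z)) // e_sym.
have := dist_mulr_le connected ratio_ge0 ratio_step y.
rewrite /back_ratio ler_pdivlMr // => ratio_y.
have := Gamma_card_le e x y; rewrite -(ler_nat R) !natrD => card_y.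
set t := _ * kappa in ratio_y *; set d := (deg e y)%:R in ratio_y card_y *.
have -> : (1 - t / 2) * d = d - t * d / 2 by ring.
move: (t * d) ratio_y => td; lra.
Qed.
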